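(* Let $F$ be an algebraically closed field of characteristic $0$ and let $\hat{\mathbb{Z}}$ be the profinite completion of $\mathbb{Z}$. Suppose $$0\to\hat{\mathbb{Z}}\overset{i_H}{\to} H\overset{\mathrm{ex}_H}{\to}F^{\times}\to1\quad\text{and}\quad 0\to\hat{\mathbb{Z}}\overset{i_G}{\to} G\overset{\mathrm{ex}_G}{\to}F^{\times}\to1$$ are exact sequences of abelian groups, where $H$ and $G$ are divisible torsion-free abelian groups. Then there is a group isomorphism $\sigma:H\to G$ such that $\mathrm{ex}_H=\mathrm{ex}_G\circ\sigma$. *)

From HB Require Import structures.
From mathcomp Require Import all_boot all_order all_algebra.
From mathcomp Require Import boolp.

Set Implicit Arguments.
Unset Strict Implicit.
Unset Printing Implicit Defensive.

Import Order.TTheory GRing.Theory Num.Theory.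
Local Open Scope ring_scope.

(* The profinite completion of Z:  Zhat = lim_{n >= 1} Z / nZ.               *)
(* An element is a compatible family (x_n)_n, where coordinate n lives in    *)
(* Z/(n+1)Z and is represented by its canonical residue in [0, n+1), and     *)
(* compatibility says x_m = x_n mod (m+1) whenever (m+1) | (n+1).            *)

Definition zhat_compat (x : nat -> int) : Prop :=
  (forall n, x n = (x n %% n.+1%:Z)%Z) /\
  (forall m n, (m.+1 %| n.+1)%N -> x m = (x n %% m.+1%:Z)%Z).

Record Zhat := MkZhat { zhat_val : nat -> int; zhat_valP : zhat_compat zhat_val }.

HB.instance Definition _ := gen_eqMixin Zhat.
HB.instance Definition _ := gen_choiceMixin Zhat.

Lemma zhat_eq (x y : Zhat) : zhat_val x =1 zhat_val y -> x = y.
Proof.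
case: x => x hx; case: y => y hy /= /funext exy.
subst y; congr MkZhat; exact: Prop_irrelevance.
Qed.

Lemma modz_dvd_nested (m n d : int) : (d %| n)%Z -> ((m %% n)%Z %% d)%Z = (m %% d)%Z.
Proof.
move=> dn; apply/eqP; rewrite eqz_mod_dvd.
have -> : ((m %% n)%Z - m = - ((m %/ n)%Z * n))%R.
  by rewrite {2}(divz_eq m n) opprD addrCA subrr addr0.
by rewrite rpredN; apply: dvdz_mull.
Qed.

Lemma zhat_dvd (m n : nat) : (m.+1 %| n.+1)%N -> (m.+1%:Z %| n.+1%:Z)%Z.
Proof. by []. Qed.

Definition zhat0_fun : nat -> int := fun _ => 0.
Lemma zhat0_compat : zhat_compat zhat0_fun.
Proof. by split=> *; rewrite /zhat0_fun mod0z. Qed.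
Definition zhat0 : Zhat := MkZhat zhat0_compat.

Definition zhat_opp_fun (x : Zhat) : nat -> int :=
  fun n => ((- zhat_val x n) %% n.+1%:Z)%Z.
Lemma zhat_opp_compat x : zhat_compat (zhat_opp_fun x).
Proof.
case: x => x [h1 h2]; rewrite /zhat_opp_fun /=; split=> [n|m n mn].
  by rewrite modz_mod.
rewrite modz_dvd_nested //; rewrite (h2 _ _ mn).
by apply/eqP; rewrite modzNm.
Qed.
Definition zhat_opp (x : Zhat) : Zhat := MkZhat (zhat_opp_compat x).

Definition zhat_add_fun (x y : Zhat) : nat -> int :=
  fun n => ((zhat_val x n + zhat_val y n) %% n.+1%:Z)%Z.
Lemma zhat_add_compat x y : zhat_compat (zhat_add_fun x y).
Proof.
case: x => x [h1 h2]; case: y => y [k1 k2]; rewrite /zhat_add_fun /=.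
split=> [n|m n mn]; first by rewrite modz_mod.
rewrite modz_dvd_nested // (h2 _ _ mn) (k2 _ _ mn).
by apply/eqP; rewrite modzDm.
Qed.
Definition zhat_add (x y : Zhat) : Zhat := MkZhat (zhat_add_compat x y).

Lemma zhat_addA : associative zhat_add.
Proof.
move=> x y z; apply: zhat_eq => n /=; rewrite /zhat_add_fun /=.
by apply/eqP; rewrite modzDml modzDmr addrA.
Qed.

Lemma zhat_addC : commutative zhat_add.
Proof. by move=> x y; apply: zhat_eq => n /=; rewrite /zhat_add_fun addrC. Qed.

Lemma zhat_add0 : left_id zhat0 zhat_add.
Proof.
move=> [x [h1 h2]]; apply: zhat_eq => n /=; rewrite /zhat_add_fun /= /zhat0_fun.
by rewrite add0r -h1.
Qed.

Lemma zhat_addN : left_inverse zhat0 zhat_opp zhat_add.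
Proof.
move=> x; apply: zhat_eq => n /=; rewrite /zhat_add_fun /zhat_opp_fun /zhat0_fun /=.
by apply/eqP; rewrite modzDml addNr mod0z.
Qed.

HB.instance Definition _ :=
  GRing.isZmodule.Build Zhat zhat_addA zhat_addC zhat_add0 zhat_addN.

Definition divisible_group (A : zmodType) : Prop :=
  forall (a : A) (n : nat), (0 < n)%N -> exists b : A, b *+ n = a.

Definition torsion_free_group (A : zmodType) : Prop :=
  forall (a : A) (n : nat), (0 < n)%N -> a *+ n = 0 -> a = 0.

(* A short exact sequence of abelian groups
     0 -> Zhat --i--> A --ex--> F^x -> 1
   where F^x is the multiplicative group of nonzero elements of the field F,
   so ex is a group homomorphism from (A, +) to (F^x, times). *)
Definition ses_Zhat_units (F : fieldType) (A : zmodType)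
    (i : Zhat -> A) (ex : A -> F) : Prop :=
  [/\
      (forall x y : Zhat, i (x + y) = i x + i y) /\ injective i,
      (forall a : A, ex a != 0),
      (forall a b : A, ex (a + b) = ex a * ex b),
      (forall a : A, ex a = 1 <-> exists x : Zhat, i x = a) &
      (forall y : F, y != 0 -> exists a : A, ex a = y)].

(* [H] and [G] are uniquely divisible, so a maximal ex-compatible partial
   isomorphism between pure subgroups (Zorn) is total and onto, once any
   pure [S] missing some [h] can be enlarged to [S + Q (h, g)]. The point is
   to choose [g] with [exG (g / n) = exH (h / n)] for all [n]: for any
   preimage [g0] of [exH h], the ratios [exH (h / n) / exG (g0 / n)] form a
   compatible system of roots of unity, and exactness together with the
   division of [Zhat] identifies such systems with [Zhat], so [g0] can be
   corrected by an element of [iG Zhat]. *)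

From mathcomp Require Import all_boot all_order all_algebra.
From mathcomp Require Import zify boolp classical_sets.
Import GRing.Theory.
Set Implicit Arguments.
Unset Strict Implicit.
Local Open Scope ring_scope.
Local Open Scope classical_set_scope.

Lemma zhat_valD (x y : Zhat) k :
  zhat_val (x + y) k = ((zhat_val x k + zhat_val y k) %% k.+1%:Z)%Z.
Proof. by []. Qed.

Lemma zhat_val_mod (x : Zhat) k : zhat_val x k = (zhat_val x k %% k.+1%:Z)%Z.
Proof. by case: x => x []. Qed.

Lemma zhat_val_dvd (x : Zhat) m n : (m.+1 %| n.+1)%N ->
  zhat_val x m = (zhat_val x n %% m.+1%:Z)%Z.
Proof. by case: x => x [xmod xcompat]; apply: xcompat. Qed.

Lemma zhat_valMn (x : Zhat) m k :
  zhat_val (x *+ m) k = ((zhat_val x k * m%:Z) %% k.+1%:Z)%Z.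
Proof.
elim: m => [|m IH]; first by rewrite mulr0n mulr0 mod0z.
by rewrite mulrS zhat_valD IH; apply/eqP; rewrite modzDmr (intS m) mulrDr mulr1.
Qed.

Lemma zhat_valB (x y : Zhat) k :
  zhat_val (x - y) k = ((zhat_val x k - zhat_val y k) %% k.+1%:Z)%Z.
Proof. by rewrite zhat_valD; apply/eqP; rewrite modzDmr. Qed.

Lemma zhat1_compat : zhat_compat (fun k => (1 %% k.+1%:Z)%Z).
Proof. by split=> [k|m n mn]; rewrite ?modz_mod ?modz_dvd_nested. Qed.

Definition zhat1 : Zhat := MkZhat zhat1_compat.

Lemma zhat_val_nat r k : zhat_val (zhat1 *+ r) k = (r%:Z %% k.+1%:Z)%Z.
Proof. by rewrite zhat_valMn; apply/eqP; rewrite modzMml mul1r. Qed.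

Definition idx_mul (n k : nat) := (n.+1 * k.+1).-1.

Lemma idx_mulS n k : (idx_mul n k).+1 = (n.+1 * k.+1)%N.
Proof. by rewrite prednK // muln_gt0. Qed.

Section ZhatDivision.
Variables (w : Zhat) (n : nat).
Hypothesis wn0 : zhat_val w n = 0.

Lemma zhat_val_idx_dvd k : (n.+1%:Z %| zhat_val w (idx_mul n k))%Z.
Proof.
apply/dvdz_mod0P; rewrite -zhat_val_dvd ?wn0 //.
by rewrite idx_mulS dvdn_mulr.
Qed.

(* The [k]-th coordinate of [w / (n+1)] is read off the coordinate of [w]
   modulo [(n+1)(k+1)]. *)
Lemma zhat_quo_compat :
  zhat_compat (fun k => ((zhat_val w (idx_mul n k) %/ n.+1%:Z)%Z %% k.+1%:Z)%Z).
Proof.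
split=> [k|j k jk]; first by rewrite modz_mod.
rewrite modz_dvd_nested //.
have := @zhat_val_dvd w (idx_mul n j) (idx_mul n k).
rewrite !idx_mulS dvdn_pmul2l // => /(_ jk).
have /divzK {1}<- := zhat_val_idx_dvd k.
rewrite PoszM mulrC -mulz_modr // => ->.
by rewrite mulKz // modz_mod.
Qed.

Lemma zhat_divisible : exists v : Zhat, v *+ n.+1 = w.
Proof.
exists (MkZhat zhat_quo_compat); apply: zhat_eq => k.
rewrite zhat_valMn /= modzMml divzK ?zhat_val_idx_dvd //.
by rewrite (@zhat_val_dvd w k (idx_mul n k)) // idx_mulS dvdn_mull.
Qed.

End ZhatDivision.

Section UnitsExtension.
Variables (F : fieldType) (A : zmodType) (iA : Zhat -> A) (exA : A -> F).
Hypotheses (sesA : ses_Zhat_units iA exA) (divA : divisible_group A)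
  (tfA : torsion_free_group A).

Lemma inclD x y : iA (x + y) = iA x + iA y.
Proof. by case: sesA => [[]]. Qed.

Lemma incl_inj : injective iA.
Proof. by case: sesA => [[]]. Qed.

Lemma incl0 : iA 0 = 0.
Proof. by apply: (addrI (iA 0)); rewrite -inclD !addr0. Qed.

Lemma inclN x : iA (- x) = - iA x.
Proof. by apply/eqP; rewrite -subr_eq0 opprK -inclD addNr incl0. Qed.

Lemma inclMn x m : iA (x *+ m) = iA x *+ m.
Proof. by elim: m => [|m IH]; rewrite ?mulr0n ?incl0 // !mulrS inclD IH. Qed.

Lemma ex_neq0 a : exA a != 0.
Proof. by case: sesA. Qed.

Lemma exD a b : exA (a + b) = exA a * exA b.
Proof. by case: sesA. Qed.

Lemma ex_eq1P a : exA a = 1 <-> exists x, iA x = a.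
Proof. by case: sesA. Qed.

Lemma ex_surj y : y != 0 -> exists a, exA a = y.
Proof. by case: sesA => _ _ _ _; apply. Qed.

Lemma ex0 : exA 0 = 1.
Proof. by apply: (mulfI (ex_neq0 0)); rewrite -exD !addr0 mulr1. Qed.

Lemma exN a : exA (- a) = (exA a)^-1.
Proof. by apply: (mulfI (ex_neq0 a)); rewrite -exD subrr ex0 divff ?ex_neq0. Qed.

Lemma exMn a m : exA (a *+ m) = exA a ^+ m.
Proof. by elim: m => [|m IH]; rewrite ?mulr0n ?ex0 // mulrS exD IH exprS. Qed.

Lemma exMz a k : exA (a *~ k) = exA a ^ k.
Proof. by case: k => m; rewrite ?NegzE ?mulrNz ?exN exMn. Qed.

Lemma ex_incl z : exA (iA z) = 1.
Proof. by apply/ex_eq1P; exists z. Qed.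

Lemma dv_subproof (u : A) n : exists b : A, b *+ n.+1 == u.
Proof. by have [b <-] := divA u (ltn0Sn n); exists b. Qed.

(* [dv u n] is the unique [u / (n+1)]; the shift avoids a positivity side
   condition. *)
Definition dv (u : A) n : A := xchoose (dv_subproof u n).

Lemma dvP u n : dv u n *+ n.+1 = u.
Proof. exact/eqP/(xchooseP (dv_subproof u n)). Qed.

Lemma dv_uniq u n w : w *+ n.+1 = u -> w = dv u n.
Proof.
move=> wu; apply/subr0_eq/(tfA (ltn0Sn n)).
by rewrite mulrnBl wu dvP subrr.
Qed.

Lemma dvK u n : dv (u *+ n.+1) n = u.
Proof. by apply/esym/dv_uniq. Qed.

Lemma dvu0 u : dv u 0 = u.
Proof. by apply/esym/dv_uniq. Qed.

Lemma dv0u n : dv 0 n = 0.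
Proof. by apply/esym/dv_uniq; rewrite mul0rn. Qed.

Lemma dvD u v n : dv (u + v) n = dv u n + dv v n.
Proof. by apply/esym/dv_uniq; rewrite mulrnDl !dvP. Qed.

Lemma dvN u n : dv (- u) n = - dv u n.
Proof. by apply/esym/dv_uniq; rewrite mulNrn dvP. Qed.

Lemma dvMz u k n : dv (u *~ k) n = dv u n *~ k.
Proof. by apply/esym/dv_uniq; rewrite pmulrn mulrzAC -pmulrn dvP. Qed.

Lemma dv_dv u n m : dv (dv u n) m = dv u (idx_mul n m).
Proof. by apply/dv_uniq; rewrite idx_mulS mulnC mulrnA !dvP. Qed.

Lemma dv_dvd u n m d : n.+1 = (d * m.+1)%N -> dv u m = dv u n *+ d.
Proof. by move=> nmd; apply/esym/dv_uniq; rewrite -mulrnA -nmd dvP. Qed.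

Lemma dvBMz u k k' n n' :
  dv (u *~ k) n - dv (u *~ k') n' =
  dv (u *~ (k * n'.+1%:Z - k' * n.+1%:Z)) (idx_mul n n').
Proof.
apply/dv_uniq; rewrite idx_mulS mulrnBl mulrnA dvP mulnC mulrnA dvP.
by rewrite mulrzBr !mulrzA -!pmulrn.
Qed.

(* [zeta r n = zeta 1 n ^+ r], and [zeta 1 n = exA (iA 1 / (n+1))] is a
   primitive [(n+1)]-th root of unity. *)
Definition zeta r n := exA (dv (iA (zhat1 *+ r)) n).

Lemma ex_dv_incl z n : exA (dv (iA z) n) = zeta `|zhat_val z n| n.
Proof.
set r := `|_|%N; have z_ge0 : 0 <= zhat_val z n by rewrite zhat_val_mod modz_ge0.
have [v vP] : exists v, v *+ n.+1 = z - zhat1 *+ r.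
  apply: zhat_divisible.
  by rewrite zhat_valB zhat_val_nat gez0_abs // -zhat_val_mod subrr mod0z.
by rewrite -(subrK (zhat1 *+ r) z) -vP inclD inclMn dvD dvK exD ex_incl mul1r.
Qed.

Lemma zeta_mod r n : zeta (r %% n.+1) n = zeta r n.
Proof.
rewrite /zeta {2}(divn_eq r n.+1) mulrnDr mulrnA inclD (inclMn (_ *+ _) n.+1) dvD dvK.
by rewrite exD ex_incl mul1r.
Qed.

Lemma zeta_dvd r n m d : n.+1 = (d * m.+1)%N -> zeta r n ^+ d = zeta r m.
Proof. by move=> nmd; rewrite /zeta (dv_dvd _ nmd) exMn. Qed.

Lemma zeta_surj n (c : F) : c ^+ n.+1 = 1 ->
  exists2 r, (r < n.+1)%N & zeta r n = c.
Proof.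
move=> cn1; have c_neq0 : c != 0.
  by apply/eqP => c0; move: cn1; rewrite c0 expr0n /= => /eqP; rewrite eq_sym oner_eq0.
have [y yc] := ex_surj c_neq0.
have /ex_eq1P [w wy] : exA (y *+ n.+1) = 1 by rewrite exMn yc.
exists `|zhat_val w n|%N; last by rewrite -ex_dv_incl wy dvK.
rewrite zhat_val_mod; have := ltz_pmod (zhat_val w n) (isT : 0 < n.+1%:Z).
by have := modz_ge0 (zhat_val w n) (isT : n.+1%:Z != 0); lia.
Qed.

Lemma zeta_inj n r r' : (r < n.+1)%N -> (r' < n.+1)%N ->
  zeta r n = zeta r' n -> r = r'.
Proof.
move=> rn r'n zeta_rr'.
have /ex_eq1P [v vP] : exA (dv (iA (zhat1 *+ r - zhat1 *+ r')) n) = 1.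
  by rewrite inclD inclN dvD dvN exD exN; rewrite [exA (dv _ n)]zeta_rr' divff ?ex_neq0.
have : v *+ n.+1 = zhat1 *+ r - zhat1 *+ r'.
  by apply: incl_inj; rewrite inclMn vP dvP.
move/(congr1 (zhat_val^~ n)); rewrite zhat_valMn zhat_valB !zhat_val_nat modzMl.
move=> /esym/dvdz_mod0P; rewrite -eqz_mod_dvd.
by rewrite !modz_nat !modn_small // => /eqP[].
Qed.

Lemma ex_dv_eq1_eq0 x : (forall n, exA (dv x n) = 1) -> x = 0.
Proof.
move=> x1; have [z xz] := proj1 (ex_eq1P _) (x1 0%N); rewrite dvu0 in xz.
rewrite -xz -incl0; congr iA; apply: zhat_eq => n.
have [v vP] := proj1 (ex_eq1P _) (x1 n).
have <- : v *+ n.+1 = z by apply: incl_inj; rewrite inclMn vP dvP xz.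
by rewrite zhat_valMn modzMl.
Qed.

Lemma roots_of_unity_lift (c : nat -> F) :
  (forall n, c n ^+ n.+1 = 1) ->
  (forall m n d, n.+1 = (d * m.+1)%N -> c n ^+ d = c m) ->
  exists z, forall n, exA (dv (iA z) n) = c n.
Proof.
move=> c_root c_compat.
have /all_sig2[r r_lt r_zeta] := fun n => sig2_eqW (zeta_surj (c_root n)).
have r_compat : zhat_compat (fun n => (r n)%:Z).
  split=> [n|m n mn]; first by rewrite modz_nat modn_small.
  rewrite modz_nat; congr Posz; apply: (@zeta_inj m); rewrite ?ltn_mod //.
  have [d nmd] := dvdnP mn.
  by rewrite zeta_mod -(zeta_dvd (r n) nmd) !r_zeta (c_compat _ _ _ nmd).
by exists (MkZhat r_compat) => n; rewrite ex_dv_incl r_zeta.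
Qed.

End UnitsExtension.

Section PartialIso.
Variables (F : fieldType) (H G : zmodType) (exH : H -> F) (exG : G -> F).

(* The graph of an isomorphism between pure subgroups of [H] and [G] that
   intertwines [exH] and [exG]; it is empty or contains [(0, 0)]. *)
Definition partial_iso (S : set (H * G)) :=
  [/\ forall g, S (0, g) -> g = 0,
      forall h, S (h, 0) -> h = 0,
      forall p q, S p -> S q -> S (p.1 - q.1, p.2 - q.2),
      forall h g m, S (h *+ m.+1, g *+ m.+1) -> S (h, g) &
      forall h g, S (h, g) -> exH h = exG g].

Variable S : set (H * G).
Hypothesis isoS : partial_iso S.

Lemma partial_iso_has0 p : S p -> S (0, 0).
Proof. by case: isoS => _ _ isoB _ _ Sp; have := isoB _ _ Sp Sp; rewrite !subrr. Qed.

Lemma partial_isoD p q : S p -> S q -> S (p.1 + q.1, p.2 + q.2).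
Proof.
case: isoS => _ _ isoB _ _ Sp Sq.
have := isoB _ _ (partial_iso_has0 Sp) Sq; rewrite /= !sub0r => SNq.
by have := isoB _ _ Sp SNq; rewrite /= !opprK.
Qed.

Lemma partial_isoMn h g m : S (h, g) -> S (h *+ m, g *+ m).
Proof.
move=> Shg; elim: m => [|m IH]; first by rewrite !mulr0n; apply: partial_iso_has0 Shg.
by rewrite !mulrS; apply: (partial_isoD Shg IH).
Qed.

Lemma partial_iso_fun h g g' : S (h, g) -> S (h, g') -> g = g'.
Proof.
case: isoS => iso0 _ isoB _ _ Shg Shg'.
by apply/subr0_eq/iso0; have := isoB _ _ Shg Shg'; rewrite subrr.
Qed.

Lemma partial_iso_inj h h' g : S (h, g) -> S (h', g) -> h = h'.
Proof.
case: isoS => _ iso0 isoB _ _ Shg Sh'g.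
by apply/subr0_eq/iso0; have := isoB _ _ Shg Sh'g; rewrite subrr.
Qed.

Lemma partial_iso_dom_mulz (divG : divisible_group G) h g k :
  k != 0 -> S (h *~ k, g) -> exists g', S (h, g').
Proof.
case: isoS => _ _ isoB isoP _.
have dom_mulSn m g0 : S (h *+ m.+1, g0) -> exists g', S (h, g').
  by move=> Sg0; exists (dv divG g0 m); apply: (isoP _ _ m); rewrite dvP.
case: k => [[|m]|m] // _; first exact: dom_mulSn.
move=> Sg; have := isoB _ _ (partial_iso_has0 Sg) Sg.
by rewrite /= !sub0r NegzE mulrNz opprK; apply: dom_mulSn.
Qed.

End PartialIso.

Lemma partial_iso_swap (F : fieldType) (H G : zmodType) (exH : H -> F)
    (exG : G -> F) (S : set (H * G)) :
  partial_iso exH exG S -> partial_iso exG exH (S \o swap_pair).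
Proof.
case => iso0l iso0r isoB isoP isoE; split=> //=.
- by move=> p q; apply: isoB.
- by move=> g h m; apply: isoP.
- by move=> g h /isoE.
Qed.

Lemma partial_iso_bigcup (F : fieldType) (H G : zmodType) (exH : H -> F)
    (exG : G -> F) (C : set (set (H * G))) :
  C `<=` partial_iso exH exG -> total_on C subset ->
  partial_iso exH exG (\bigcup_(S in C) S).
Proof.
move=> isoC totC; split.
- by move=> g [S /isoC[iso0 _ _ _ _] /iso0].
- by move=> h [S /isoC[_ iso0 _ _ _] /iso0].
- move=> p q [S CS Sp] [S' CS' S'q].
  have [SS'|S'S] := totC S S' CS CS'.
    by exists S' => //; case: (isoC S' CS') => _ _ isoB _ _; apply: isoB (SS' _ Sp) S'q.
  by exists S => //; case: (isoC S CS) => _ _ isoB _ _; apply: isoB Sp (S'S _ S'q).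
- move=> h g m [S CS Sp]; exists S => //.
  by case: (isoC S CS) => _ _ _ isoP _; apply: isoP Sp.
- by move=> h g [S /isoC[_ _ _ _ isoE] /isoE].
Qed.

Section SpanExtension.
Variables (F : fieldType) (H G : zmodType) (exH : H -> F) (exG : G -> F).
Variables (iH : Zhat -> H) (iG : Zhat -> G).
Hypotheses (sesH : ses_Zhat_units iH exH) (sesG : ses_Zhat_units iG exG).
Variables (divH : divisible_group H) (divG : divisible_group G).
Hypotheses (tfH : torsion_free_group H) (tfG : torsion_free_group G).
Variables (S : set (H * G)) (h : H) (g : G).

Definition span_ext : set (H * G) :=
  [set p | exists a b k n, S (a, b) /\
    p = (a + dv divH (h *~ k) n, b + dv divG (g *~ k) n)].

Lemma span_ext_sub : S `<=` span_ext.
Proof.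
case=> a b Sab; exists a, b, 0, 0%N; split => //.
by rewrite !mulr0z !dv0u ?addr0.
Qed.

Hypothesis isoS : partial_iso exH exG S.

Lemma partial_iso_dv a b n : S (a, b) -> S (dv divH a n, dv divG b n).
Proof. by case: isoS => _ _ _ isoP _ Sab; apply: (isoP _ _ n); rewrite !dvP. Qed.

Lemma span_ext_new : S (0, 0) -> span_ext (h, g).
Proof. by move=> S00; exists 0, 0, 1, 0%N; rewrite !mulr1z !dvu0 ?add0r. Qed.

Lemma span_ext_zero_fst : ~ (exists g', S (h, g')) ->
  forall y, span_ext (0, y) -> y = 0.
Proof.
move=> h_notin y [a [b [k [n [Sab [a_hk y_bg]]]]]].
have [k0|k_neq0] := eqVneq k 0.
  move: a_hk y_bg; rewrite k0 mulr0z !dv0u // !addr0 => a0 ->.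
  by case: isoS => iso0 _ _ _ _; apply: iso0; rewrite a0.
have hNk : h *~ (- k) = a *+ n.+1.
  apply/eqP; rewrite mulrNz eq_sym -addr_eq0 -[h *~ k](dvP divH _ n) -mulrnDl.
  by rewrite -a_hk mul0rn.
have : S (h *~ (- k), b *+ n.+1) by rewrite hNk; apply: (partial_isoMn isoS n.+1 Sab).
by move/(partial_iso_dom_mulz isoS divG); rewrite oppr_eq0 => /(_ k_neq0).
Qed.

Lemma span_extB p q : span_ext p -> span_ext q -> span_ext (p.1 - q.1, p.2 - q.2).
Proof.
move=> [a [b [k [n [Sab ->]]]]] [a' [b' [k' [n' [Sab' ->]]]]].
exists (a - a'), (b - b'), (k * n'.+1%:Z - k' * n.+1%:Z), (idx_mul n n').
split; first by case: isoS => _ _ isoB _ _; apply: (isoB _ _ Sab Sab').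
by rewrite /= !opprD (addrACA a) (addrACA b) !dvBMz.
Qed.

Lemma span_ext_pure x y m : span_ext (x *+ m.+1, y *+ m.+1) -> span_ext (x, y).
Proof.
move=> [a [b [k [n [Sab [xa yb]]]]]].
exists (dv divH a m), (dv divG b m), k, (idx_mul n m); split.
  exact: partial_iso_dv.
by rewrite -(dvK divH tfH x m) -(dvK divG tfG y m) xa yb !dvD // !dv_dv.
Qed.

Hypothesis hg : forall n, exG (dv divG g n) = exH (dv divH h n).

Lemma span_ext_ex x y : span_ext (x, y) -> exH x = exG y.
Proof.
move=> [a [b [k [n [Sab [-> ->]]]]]].
case: isoS => _ _ _ _ isoE.
by rewrite (exD sesH) (exD sesG) (isoE _ _ Sab) !dvMz // (exMz sesH) (exMz sesG) hg.
Qed.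

End SpanExtension.

Lemma span_ext_swap (H G : zmodType) (divH : divisible_group H)
    (divG : divisible_group G) (S : set (H * G)) h g x y :
  span_ext divH divG S h g (x, y) ->
  span_ext divG divH (S \o swap_pair) g h (y, x).
Proof. by case=> a [b [k [n [Sab [-> ->]]]]]; exists b, a, k, n. Qed.

Definition maximal_partial_iso (F : fieldType) (H G : zmodType)
    (exH : H -> F) (exG : G -> F) (S : set (H * G)) :=
  partial_iso exH exG S /\ forall S', S `<` S' -> ~ partial_iso exH exG S'.

Lemma maximal_partial_iso_swap (F : fieldType) (H G : zmodType)
    (exH : H -> F) (exG : G -> F) (S : set (H * G)) :
  maximal_partial_iso exH exG S -> maximal_partial_iso exG exH (S \o swap_pair).
Proof.
case=> isoS maxS; split; first exact: partial_iso_swap.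
move=> S' [sub nsub] /partial_iso_swap isoS'; apply: (maxS _ _ isoS'); split.
  by case=> h g Shg; apply: sub.
by move=> sub'; apply: nsub => -[g h] S'gh; apply: (sub' (h, g)).
Qed.

Section TwoExtensions.
Variables (F : fieldType) (H G : zmodType).
Variables (iH : Zhat -> H) (exH : H -> F) (iG : Zhat -> G) (exG : G -> F).
Hypotheses (sesH : ses_Zhat_units iH exH) (sesG : ses_Zhat_units iG exG).
Hypotheses (divH : divisible_group H) (tfH : torsion_free_group H).
Hypotheses (divG : divisible_group G) (tfG : torsion_free_group G).

Lemma ex_dv_lift h : exists g, forall n, exG (dv divG g n) = exH (dv divH h n).
Proof.
have [g0 g0h] := ex_surj sesG (ex_neq0 sesH h).
pose c n := exH (dv divH h n) / exG (dv divG g0 n).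
have c_root n : c n ^+ n.+1 = 1.
  rewrite exprMn exprVn -(exMn sesH) -(exMn sesG) !dvP g0h.
  by rewrite divff // (ex_neq0 sesH).
have c_compat m n d : n.+1 = (d * m.+1)%N -> c n ^+ d = c m.
  move=> nmd; rewrite exprMn exprVn -(exMn sesH) -(exMn sesG).
  by rewrite -(dv_dvd divH tfH h nmd) -(dv_dvd divG tfG g0 nmd).
have [z zc] := roots_of_unity_lift sesG divG tfG c_root c_compat.
exists (g0 + iG z) => n.
by rewrite (dvD divG tfG) (exD sesG) zc mulrC divfK // (ex_neq0 sesG).
Qed.

Lemma lift_notin_range S h g : partial_iso exH exG S ->
  ~ (exists g', S (h, g')) ->
  (forall n, exG (dv divG g n) = exH (dv divH h n)) ->
  ~ (exists h', S (h', g)).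
Proof.
move=> isoS h_notin hg [a Sag]; apply: h_notin; exists g.
suff -> : h = a by [].
apply/subr0_eq/(ex_dv_eq1_eq0 sesH tfH) => n.
case: isoS (partial_iso_dv divH divG isoS n Sag) => _ _ _ _ isoE /isoE exa.
rewrite (dvD divH tfH) (dvN divH tfH) (exD sesH) (exN sesH) exa -hg.
by rewrite divff // (ex_neq0 sesG).
Qed.

Lemma partial_iso_extend S h : partial_iso exH exG S -> S (0, 0) ->
  ~ (exists g, S (h, g)) -> exists2 S', partial_iso exH exG S' & S `<` S'.
Proof.
move=> isoS S00 h_notin; have [g hg] := ex_dv_lift h.
have g_notin := lift_notin_range isoS h_notin hg.
exists (span_ext divH divG S h g); last first.
  split; first exact: span_ext_sub.
  by move=> sub; apply: h_notin; exists g; apply/sub/span_ext_new.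
split=> [y|x|p q|x y m|x y] Sspan.
- exact (span_ext_zero_fst tfH tfG isoS h_notin Sspan).
- exact (span_ext_zero_fst tfG tfH (partial_iso_swap isoS) g_notin (span_ext_swap Sspan)).
- by move=> Sq; exact (span_extB tfH tfG isoS Sspan Sq).
- exact (span_ext_pure tfH tfG isoS Sspan).
- exact (span_ext_ex sesH sesG tfH tfG isoS hg Sspan).
Qed.

Lemma partial_iso_origin : partial_iso exH exG [set (0, 0)].
Proof.
split=> //=.
- by move=> g [].
- by move=> h [].
- by move=> p q -> ->; rewrite !subrr.
- by move=> h g m [/tfH-> // /tfG->].
- by move=> h g [-> ->]; rewrite (ex0 sesH) (ex0 sesG).
Qed.

Section Maximal.
Variable S : set (H * G).
Hypothesis maxS : maximal_partial_iso exH exG S.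

Lemma maximal_partial_iso_has0 : S (0, 0).
Proof.
case: maxS => isoS maxS'; apply: contrapT => S00.
suff S_lt0 : S `<` [set (0, 0)] by exact: maxS' S_lt0 partial_iso_origin.
split; first by move=> p /(partial_iso_has0 isoS)/S00.
by move=> sub; apply/S00/sub.
Qed.

Lemma maximal_partial_iso_total h : exists g, S (h, g).
Proof.
case: (maxS) => isoS maxS'; apply: contrapT => h_notin.
have [S' isoS' SS'] := partial_iso_extend isoS maximal_partial_iso_has0 h_notin.
exact: maxS' SS' isoS'.
Qed.

End Maximal.
End TwoExtensions.

Lemma partial_iso_total_bij (F : fieldType) (H G : zmodType)
    (exH : H -> F) (exG : G -> F) (S : set (H * G)) :
  partial_iso exH exG S -> S (0, 0) ->
  (forall h, exists g, S (h, g)) -> (forall g, exists h, S (h, g)) ->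
  exists sigma : H -> G,
    [/\ (forall a b : H, sigma (a + b) = sigma a + sigma b),
        bijective sigma &
        (forall a : H, exH a = exG (sigma a))].
Proof.
move=> isoS S00 /(_ _)/cid-/all_sig[sigma Ssigma] /(_ _)/cid-/all_sig[tau Stau].
exists sigma; split.
- move=> a b; apply: (partial_iso_fun isoS (Ssigma (a + b))).
  exact: (partial_isoD isoS (Ssigma a) (Ssigma b)).
- exists tau => [h|g].
    exact (partial_iso_inj isoS (Stau (sigma h)) (Ssigma h)).
  exact (partial_iso_fun isoS (Ssigma (tau g)) (Stau g)).
- by case: isoS => _ _ _ _ isoE a; apply: isoE.
Qed.

Theorem proposition3p8 (F : closedFieldType) (HF : [pchar F] =i pred0)
    (H G : zmodType)
    (iH : Zhat -> H) (exH : H -> F) (iG : Zhat -> G) (exG : G -> F)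
    (sesH : ses_Zhat_units iH exH) (sesG : ses_Zhat_units iG exG)
    (divH : divisible_group H) (tfH : torsion_free_group H)
    (divG : divisible_group G) (tfG : torsion_free_group G) :
  exists sigma : H -> G,
    [/\ (forall a b : H, sigma (a + b) = sigma a + sigma b),
        bijective sigma &
        (forall a : H, exH a = exG (sigma a))].
Proof.
have [S maxS] : exists S, maximal_partial_iso exH exG S.
  exact: Zorn_bigcup (@partial_iso_bigcup F H G exH exG).
apply: (partial_iso_total_bij maxS.1).
- exact (maximal_partial_iso_has0 sesH sesG tfH tfG maxS).
- exact (maximal_partial_iso_total sesH sesG divH tfH divG tfG maxS).
- exact (maximal_partial_iso_total sesG sesH divG tfG divH tfH
    (maximal_partial_iso_swap maxS)).
Qed.
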